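(* Let $G$, $\delta$, $l$ satisfy: $G$ torsion-free, $l:G\to\mathbb{Z}^n$ a $\delta$-regular $\delta$-hyperbolic length function with (A) $ht(\delta)=1$, (B) for all $g\in G$ and nonzero integers $m$, $l(g^m)<l(g)$ implies $ht(l(g)-l(g^m))=1$, (C) $l(g)>0$ for $g\ne1$. Then for every $k\ge1$ the length function $l_k:G\to\mathbb{Z}^{n-k}$ is $0$-hyperbolic, $0$-regular, and satisfies $l_k(g^2)\ge l_k(g)$ for all $g\in G$.
   Context: $\mathbb{Z}^m$ (and $\mathbb{Q}^m$) carries the right lexicographic order: $(a_1,\dots,a_m)<(b_1,\dots,b_m)$ iff $a_j<b_j$ for the largest $j$ with $a_j\ne b_j$. $ht(a)$ is the largest index $k$ with $a_k\ne0$, $ht(0)=0$. A length function $L:G\to\mathbb{Z}^m$ satisfies $L(1)=0$, $L(g)\ge0$, $L(g^{-1})=L(g)$, $L(gh)\le L(g)+L(h)$; $c_L(g,h)=\tfrac12(L(g)+L(h)-L(g^{-1}h))$. $L$ is $\delta$-hyperbolic if $c_L(f,g)\ge\min\{c_L(f,h),c_L(g,h)\}-\delta$ for all $f,g,h$. $g=a\circ b$ means $g=ab$ and $L(g)=L(a)+L(b)$; $L$ is $\delta$-regular if for all $g,h$ there exist $g_c,h_c,g_d,h_d$ with $L(g_c)=L(h_c)=c_L(g,h)$, $g=g_c\circ g_d$, $h=h_c\circ h_d$, $L(g_c^{-1}h_c)\le4\delta$. For $k\ge1$, $l_k(g)=(a_{k+1},\dots,a_n)$ where $l(g)=(a_1,\dots,a_n)$.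 *)

(* Vectors in Z^m / Q^m are row
   vectors 'rV[int]_m / 'rV[rat]_m; coordinate a_j (1-based) is [a ord0 j'] with
   j' = j-1 (0-based ordinal). *)
From HB Require Import structures.
From mathcomp Require Import all_boot all_order all_algebra.

Set Implicit Arguments.
Unset Strict Implicit.
Unset Printing Implicit Defensive.

Import Order.TTheory GRing.Theory Num.Theory.
Local Open Scope ring_scope.

Section Lex.
Variables (R : realDomainType) (m : nat).
Implicit Types a b : 'rV[R]_m.

Definition lexlt a b : bool :=
  [exists j : 'I_m, (a ord0 j < b ord0 j) &&
     [forall i : 'I_m, (j < i)%N ==> (a ord0 i == b ord0 i)]].
Definition lexle a b : bool := (a == b) || lexlt a b.
Definition lexmin a b : 'rV[R]_m := if lexle a b then a else b.

Definition ht a : nat := (\max_(i < m | a ord0 i != 0%R) i.+1)%N.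
End Lex.

Definition toQ m (v : 'rV[int]_m) : 'rV[rat]_m := map_mx (fun z : int => z%:~R) v.

Section LengthFunctions.
Variables (G : groupType) (m : nat) (L : G -> 'rV[int]_m).

Definition is_length_function : Prop :=
  [/\ L 1%g = 0,
      forall g, lexle 0 (L g),
      forall g, L (g^-1)%g = L g &
      forall g h, lexle (L (g * h)%g) (L g + L h)].

Definition cL (g h : G) : 'rV[rat]_m :=
  (1/2 : rat) *: (toQ (L g) + toQ (L h) - toQ (L (g^-1 * h)%g)).

Definition hyperbolic (delta : 'rV[int]_m) : Prop :=
  forall f g h, lexle (lexmin (cL f h) (cL g h) - toQ delta) (cL f g).

Definition lcomp (g a b : G) : Prop := g = (a * b)%g /\ L g = L a + L b.

Definition regular (delta : 'rV[int]_m) : Prop :=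
  forall g h, exists gc hc gd hd : G,
    [/\ toQ (L gc) = cL g h, toQ (L hc) = cL g h,
        lcomp g gc gd, lcomp h hc hd &
        lexle (L (gc^-1 * hc)%g) (delta *+ 4)].
End LengthFunctions.

Definition zexpg (G : groupType) (g : G) (z : int) : G :=
  match z with
  | Posz n => (g ^+ n)%g
  | Negz n => ((g ^+ n.+1)^-1)%g
  end.

Definition torsion_free (G : groupType) : Prop :=
  forall (g : G) (n : nat), (0 < n)%N -> (g ^+ n)%g = 1%g -> g = 1%g.

(* j-th (0-based) entry of v, 0 if out of range *)
Definition ventry m (v : 'rV[int]_m) (j : nat) : int :=
  match insub j : option 'I_m with Some j' => v ord0 j' | None => 0 end.

(* l_k(g) = (a_{k+1}, ..., a_n) where l(g) = (a_1, ..., a_n) *)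
Definition lk (G : groupType) n (k : nat) (l : G -> 'rV[int]_n) (g : G)
  : 'rV[int]_(n - k) :=
  \row_(i < n - k) ventry (l g) (i + k).

From HB Require Import structures.
From mathcomp Require Import all_boot all_order all_algebra.
From mathcomp Require Import zify.
Import Order.TTheory GRing.Theory Num.Theory.
Set Implicit Arguments.
Unset Strict Implicit.
Unset Printing Implicit Defensive.

Local Open Scope ring_scope.

(* The condition ht(delta) = 1 says delta lives in the first coordinate, and
   condition (B) says that l(g^2) < l(g) can only happen through a change of
   the first coordinate.  Dropping the first k >= 1 coordinates is linear and
   monotone for the right lexicographic order, so it maps delta to 0 and turns
   every axiom of l into the corresponding axiom of l_k with delta = 0. *)

Section RightLex.
Variables (R : realDomainType) (m : nat).
Implicit Types a b : 'rV[R]_m.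

Lemma lexltP a b : lexlt a b ->
  exists2 j : 'I_m, a ord0 j < b ord0 j
                  & forall i : 'I_m, (j < i)%N -> a ord0 i = b ord0 i.
Proof.
case/existsP => j /andP[ltj /forallP eq_after]; exists j => // i ji.
by have /implyP/(_ ji)/eqP := eq_after i.
Qed.

Lemma lexle_refl a : lexle a a.
Proof. by rewrite /lexle eqxx. Qed.

Lemma lexltW a b : lexlt a b -> lexle a b.
Proof. by rewrite /lexle orbC => ->. Qed.

Lemma lexle_anti a b : lexle a b -> lexle b a -> a = b.
Proof.
case/orP => [/eqP -> // | /lexltP[j1 lt1 eq1]].
case/orP => [/eqP -> // | /lexltP[j2 lt2 eq2]].
case: (ltngtP j1 j2) => [j12|j21|/val_inj j12].
- by move: lt2; rewrite eq1 // ltxx.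
- by move: lt1; rewrite eq2 // ltxx.
- by move: lt2; rewrite -j12 => /(lt_trans lt1); rewrite ltxx.
Qed.

Lemma lexNlt_le a b : ~~ lexlt b a -> lexle a b.
Proof.
move=> Nba; case: (eqVneq a b) => [->|neq_ab]; first exact: lexle_refl.
have [i0 neq_i0] : exists i, a ord0 i != b ord0 i.
  apply/existsP; apply: contraNT neq_ab => /existsPn eq_ab.
  by apply/eqP/matrixP => i j; rewrite [i]ord1; have /negPn/eqP := eq_ab j.
have [j neq_j max_j] :=
  @arg_maxnP _ i0 (fun i : 'I_m => a ord0 i != b ord0 i) val neq_i0.
have eq_after (i : 'I_m) : (j < i)%N -> a ord0 i == b ord0 i.
  by apply: contraTT => /max_j; rewrite -leqNgt.
case/orP: (lt_total neq_j) => [lt_ab|lt_ba].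
  apply: lexltW; apply/existsP; exists j; rewrite lt_ab.
  by apply/forallP => i; apply/implyP/eq_after.
case/negP: Nba; apply/existsP; exists j; rewrite lt_ba.
by apply/forallP => i; apply/implyP => /eq_after; rewrite eq_sym.
Qed.

End RightLex.

Lemma ltn_drop_ord m k (i : 'I_(m - k)) : (i + k < m)%N.
Proof. by have := ltn_ord i; lia. Qed.

Definition drop_ord m k (i : 'I_(m - k)) : 'I_m := Ordinal (ltn_drop_ord i).

Section DropCoordinates.
Variables (R : realDomainType) (m k : nat).
Implicit Types a b : 'rV[R]_m.

Definition vdrop (v : 'rV[R]_m) : 'rV[R]_(m - k) := mxsub id (@drop_ord m k) v.
HB.instance Definition _ := GRing.Linear.copy vdrop (mxsub id (@drop_ord m k)).

Lemma vdropE v i : vdrop v ord0 i = v ord0 (drop_ord i).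
Proof. by rewrite mxE. Qed.

Lemma vdrop_lexle a b : lexle a b -> lexle (vdrop a) (vdrop b).
Proof.
case/orP => [/eqP -> | /lexltP[j lt_j eq_after]]; first exact: lexle_refl.
have [kj|jk] := leqP k j.
  have jk_lt : (j - k < m - k)%N by have := ltn_ord j; lia.
  apply/orP; right; apply/existsP; exists (Ordinal jk_lt).
  rewrite !vdropE; have -> : drop_ord (Ordinal jk_lt) = j by apply: val_inj => /=; lia.
  rewrite lt_j; apply/forallP => i; apply/implyP => /= ji.
  by rewrite !vdropE eq_after //=; lia.
apply/orP; left; apply/eqP/matrixP => i' i; rewrite [i']ord1.
by rewrite !vdropE eq_after //=; lia.
Qed.

Lemma vdrop_lexmin a b : vdrop (lexmin a b) = lexmin (vdrop a) (vdrop b).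
Proof.
rewrite /lexmin; case: ifP => [/vdrop_lexle -> // | Nab].
have /vdrop_lexle le_ba : lexle b a.
  by apply: lexNlt_le; apply: contraFN Nab; apply: lexltW.
by case: ifP => // le_ab; apply: lexle_anti.
Qed.

Lemma vdrop_ht_le a : (ht a <= k)%N -> vdrop a = 0.
Proof.
move=> ht_le; apply/matrixP => i' i; rewrite [i']ord1 vdropE mxE.
apply/eqP; apply: contraTT ht_le => nz; rewrite -ltnNge.
have := @leq_bigmax_cond _ (fun j : 'I_m => a ord0 j != 0) (fun j : 'I_m => j.+1) _ nz.
rewrite /ht /=; lia.
Qed.

End DropCoordinates.
Arguments vdrop {R m} k v.

Lemma toQ_vdrop m k (v : 'rV[int]_m) : toQ (vdrop k v) = vdrop k (toQ v).
Proof. by apply/matrixP => i j; rewrite !(mxE, vdropE). Qed.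

Lemma toQ0 m : toQ (0 : 'rV[int]_m) = 0.
Proof. by apply/matrixP => i j; rewrite !mxE. Qed.

Section TruncatedLength.
Variables (G : groupType) (n k : nat) (l : G -> 'rV[int]_n).

Lemma lkE g : lk k l g = vdrop k (l g).
Proof.
apply/matrixP => i j; rewrite [i]ord1 vdropE !mxE /ventry.
case: insubP => [j' _ j'E | ]; last by rewrite ltn_drop_ord.
by congr (l g _ _); apply: val_inj.
Qed.

Lemma cL_lk g h : cL (lk k l) g h = vdrop k (cL l g h).
Proof. by rewrite /cL !lkE !toQ_vdrop -raddfD -raddfB -linearZ. Qed.

Lemma lk_length_function : is_length_function l -> is_length_function (lk k l).
Proof.
case=> l1 l_ge0 l_inv l_sub; split=> [|g|g|g h]; rewrite ?lkE.
- by rewrite l1 raddf0.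
- by rewrite -(raddf0 (vdrop k)); apply: vdrop_lexle.
- by rewrite l_inv.
- by rewrite -raddfD; apply: vdrop_lexle.
Qed.

Lemma lk_lexle g h :
  (lexlt (l h) (l g) -> (ht (l g - l h) <= k)%N) -> lexle (lk k l g) (lk k l h).
Proof.
rewrite !lkE; case: (boolP (lexlt (l h) (l g))) => [_ /(_ isT) ht_le | Nlt _].
  move/eqP: (vdrop_ht_le ht_le); rewrite raddfB subr_eq0 => /eqP ->.
  exact: lexle_refl.
by apply/vdrop_lexle/lexNlt_le.
Qed.

Variable delta : 'rV[int]_n.
Hypothesis ht_delta : (ht delta <= k)%N.

Lemma lk_hyperbolic : hyperbolic l delta -> hyperbolic (lk k l) 0.
Proof.
move=> l_hyp f g h; rewrite !cL_lk toQ0 subr0 -vdrop_lexmin.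
move: (vdrop_lexle k (l_hyp f g h)).
by rewrite raddfB /= -toQ_vdrop (vdrop_ht_le ht_delta) toQ0 subr0.
Qed.

Lemma lk_regular : regular l delta -> regular (lk k l) 0.
Proof.
move=> l_reg g h.
have [gc [hc [gd [hd [gcE hcE [gE lg] [hE lh] small]]]]] := l_reg g h.
exists gc, hc, gd, hd; split; rewrite ?cL_lk ?lkE ?toQ_vdrop.
- by rewrite gcE.
- by rewrite hcE.
- by split=> //; rewrite !lkE lg raddfD.
- by split=> //; rewrite !lkE lh raddfD.
- by move: (vdrop_lexle k small); rewrite raddfMn /= (vdrop_ht_le ht_delta) mul0rn.
Qed.

End TruncatedLength.

Theorem lemma3p3 (G : groupType) (n : nat) (l : G -> 'rV[int]_n)
    (delta : 'rV[int]_n) :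
  torsion_free G ->
  is_length_function l ->
  hyperbolic l delta ->
  regular l delta ->
  ht delta = 1%N ->
  (forall (g : G) (z : int), z != 0 ->
     lexlt (l (zexpg g z)) (l g) -> ht (l g - l (zexpg g z)) = 1%N) ->
  (forall g : G, g != 1%g -> lexlt 0 (l g)) ->
  forall k : nat, (1 <= k)%N ->
    [/\ is_length_function (lk k l),
        hyperbolic (lk k l) 0,
        regular (lk k l) 0 &
        forall g : G, lexle (lk k l g) (lk k l (g ^+ 2)%g)].
Proof.
move=> _ l_len l_hyp l_reg ht_delta ht_pow _ k k_ge1.
have ht_delta_le : (ht delta <= k)%N by rewrite ht_delta.
split.
- exact: lk_length_function.
- exact: lk_hyperbolic ht_delta_le l_hyp.
- exact: lk_regular ht_delta_le l_reg.
- by move=> g; apply: lk_lexle => /(ht_pow g 2%:Z isT) ->.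
Qed.
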